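(* Fix $\varepsilon>0$, $\beta\in(0,1)$, an even integer $d>4(e^{2\varepsilon}-1)^2\ln\frac{2}{\beta}$, and an $\varepsilon$-private randomizer $R:[d]\to\mathcal Y$. For every message $y\in\mathcal Y$, if $H$ is chosen uniformly at random among subsets of $[d]$ of size $d/2$, then \[ \Pr_H\left[y \text{ is not } (e^{2\varepsilon}-1)\sqrt{\tfrac{4}{d}\ln\tfrac{2}{\beta}}\text{-leaky with respect to } H,R\right]\ge 1-\beta . \]
   Context: A randomizer $R:[d]\to\mathcal Y$ is a randomized map into a countable message set $\mathcal Y$; it is $\varepsilon$-private if for all $x,x'\in[d]$ and all $Y\subseteq\mathcal Y$, $\Pr[R(x)\in Y]\le e^{\varepsilon}\Pr[R(x')\in Y]$. $\mathbf U$ is the uniform distribution on $[d]$; for $H\subseteq[d]$, $\mathbf U_H$ is the uniform distribution on $H$; $R(\mathbf U)$ (resp. $R(\mathbf U_H)$) is the distribution of $R(\hat x)$ where $\hat x\sim\mathbf U$ (resp. $\hat x\sim \mathbf U_H$). For $H\subset[d]$ with $|H|=d/2$, a message $y$ is $v$-leaky with respect to $H,R$ if $\left|\ln\frac{\Pr[R(\mathbf U_H)=y]}{\Pr[R(\mathbf U)=y]}\right|>v$ (messages with $\Pr[R(\mathbf U)=y]=0$ are regarded as not leaky). *)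

From Stdlib Require Import Reals Lra List Arith.
Open Scope R_scope.

Fixpoint fsum (n : nat) (f : nat -> R) : R :=
  match n with
  | O => 0
  | S k => fsum k f + f k
  end.

(* A randomizer R : [d] -> Y, with [d] = {0,...,d-1} and the countable
   message set Y encoded into nat.  p x y = Pr[R(x) = y]. *)
Definition is_randomizer (d : nat) (p : nat -> nat -> R) : Prop :=
  (forall x y, 0 <= p x y) /\
  (forall x, (x < d)%nat -> infinite_sum (p x) 1).

Definition prob_in (p : nat -> nat -> R) (x : nat) (S : nat -> bool) (l : R) : Prop :=
  infinite_sum (fun y => if S y then p x y else 0) l.

Definition eps_private (eps : R) (d : nat) (p : nat -> nat -> R) : Prop :=
  forall x x' (S : nat -> bool) l1 l2, (x < d)%nat -> (x' < d)%nat ->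
    prob_in p x S l1 -> prob_in p x' S l2 -> l1 <= exp eps * l2.

(* Subsets of [d] encoded as boolean characteristic vectors of length d. *)
Fixpoint bvecs (n : nat) : list (list bool) :=
  match n with
  | O => nil :: nil
  | S k => map (cons true) (bvecs k) ++ map (cons false) (bvecs k)
  end.

Definition mem (h : list bool) (x : nat) : bool := nth x h false.

Definition card (h : list bool) : nat := count_occ Bool.bool_dec h true.

Definition prU (d : nat) (p : nat -> nat -> R) (y : nat) : R :=
  fsum d (fun x => p x y) / INR d.

Definition prUH (d : nat) (p : nat -> nat -> R) (h : list bool) (y : nat) : R :=
  fsum d (fun x => if mem h x then p x y else 0) / INR (card h).

(* y is v-leaky w.r.t. H, R.  Messages with Pr[R(U)=y] = 0 are not leaky;
   if Pr[R(U_H)=y] = 0 < Pr[R(U)=y] the log-ratio is -infinity, hence leaky. *)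
Definition leaky (v : R) (d : nat) (p : nat -> nat -> R) (h : list bool) (y : nat) : Prop :=
  0 < prU d p y /\
  (prUH d p h y = 0 \/ Rabs (ln (prUH d p h y / prU d p y)) > v).

Definition Rltb (a b : R) : bool := if Rlt_dec a b then true else false.
Definition Reqb (a b : R) : bool := if Req_EM_T a b then true else false.

Definition leakyb (v : R) (d : nat) (p : nat -> nat -> R) (h : list bool) (y : nat) : bool :=
  Rltb 0 (prU d p y) &&
  (Reqb (prUH d p h y) 0 || Rltb v (Rabs (ln (prUH d p h y / prU d p y)))).

Definition half_subsets (d : nat) : list (list bool) :=
  filter (fun h => Nat.eqb (card h) (d / 2)) (bvecs d).

Definition prob_not_leaky (v : R) (d : nat) (p : nat -> nat -> R) (y : nat) : R :=
  INR (length (filter (fun h => negb (leakyb v d p h y)) (half_subsets d)))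
  / INR (length (half_subsets d)).

(* By privacy the d numbers [a_x = Pr[R(x) = y]] lie in an interval [[L, e^eps L]], so
   [Pr[R(U_H) = y]] is the mean of a uniformly random half-sample of numbers of range
   [M = (e^eps - 1) L <= (e^eps - 1) Pr[R(U) = y]].  Summing [exp (lam * S_H)] over all half-subsets
   [H] gives the elementary symmetric polynomial [e_(d/2)] of the [exp (lam * a_x)]; the identity
   [(k+1) e_(k+1)(a) = sum_j a_j e_k(a without a_j)] together with Hoeffding's lemma yields, by
   induction, the sub-Gaussian moment bound of Hoeffding's inequality without replacement.
   Chernoff's bound then shows that the half-sample mean has relative error at least
   [t = (e^eps - 1) sqrt (4 ln (2/beta) / d)] with probability at most [beta], and a relative error
   below [t < 1] moves the log-ratio by less than [t / (1 - t) <= (e^(2 eps) - 1) sqrt (...)]. *)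

From Stdlib Require Import Reals Lra List Arith Lia.
From Coquelicot Require Import Coquelicot.
Open Scope R_scope.

Lemma fsum_ext n f g : (forall j, (j < n)%nat -> f j = g j) -> fsum n f = fsum n g.
Proof.
  induction n as [|n IH]; intros Hfg; simpl; [reflexivity|].
  rewrite IH by (intros; apply Hfg; lia). rewrite Hfg by lia. reflexivity.
Qed.

Lemma fsum_le n f g : (forall j, (j < n)%nat -> f j <= g j) -> fsum n f <= fsum n g.
Proof.
  induction n as [|n IH]; intros Hfg; simpl; [lra|].
  pose proof (IH ltac:(intros; apply Hfg; lia)). pose proof (Hfg n ltac:(lia)). lra.
Qed.

Lemma fsum_plus n f g : fsum n (fun j => f j + g j) = fsum n f + fsum n g.
Proof. induction n as [|n IH]; simpl; [ring|]. rewrite IH; ring. Qed.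

Lemma fsum_scal n a f : fsum n (fun j => a * f j) = a * fsum n f.
Proof. induction n as [|n IH]; simpl; [ring|]. rewrite IH; ring. Qed.

Lemma fsum_shift n g : fsum (S n) g = g 0%nat + fsum n (fun j => g (S j)).
Proof. induction n as [|n IH]; simpl in *; [ring|]. rewrite IH; ring. Qed.

Fixpoint lsum (l : list R) : R :=
  match l with nil => 0 | z :: l' => z + lsum l' end.

Lemma lsum_app l1 l2 : lsum (l1 ++ l2) = lsum l1 + lsum l2.
Proof. induction l1 as [|z l1 IH]; simpl; [ring|]. rewrite IH; ring. Qed.

Lemma lsum_map_ext {T} (L : list T) f g :
  (forall x, In x L -> f x = g x) -> lsum (map f L) = lsum (map g L).
Proof.
  induction L as [|a L IH]; simpl; intros Hfg; [reflexivity|].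
  rewrite Hfg, IH by auto; reflexivity.
Qed.

Lemma lsum_map_le {T} (L : list T) f g :
  (forall x, In x L -> f x <= g x) -> lsum (map f L) <= lsum (map g L).
Proof.
  induction L as [|a L IH]; simpl; intros Hfg; [lra|].
  pose proof (Hfg a (or_introl eq_refl)). pose proof (IH (fun x Hx => Hfg x (or_intror Hx))). lra.
Qed.

Lemma lsum_map_plus {T} (L : list T) f g :
  lsum (map (fun x => f x + g x) L) = lsum (map f L) + lsum (map g L).
Proof. induction L as [|a L IH]; simpl; [ring|]. rewrite IH; ring. Qed.

Lemma lsum_map_scal {T} (L : list T) a f :
  lsum (map (fun x => a * f x) L) = a * lsum (map f L).
Proof. induction L as [|b L IH]; simpl; [ring|]. rewrite IH; ring. Qed.

Lemma lsum_map_const {T} (L : list T) a : lsum (map (fun _ => a) L) = INR (length L) * a.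
Proof.
  induction L as [|b L IH]; simpl lsum; simpl length; [simpl; ring|].
  rewrite IH, S_INR; ring.
Qed.

Lemma lsum_map_id (l : list R) : lsum (map (fun z => z) l) = lsum l.
Proof. rewrite map_id; reflexivity. Qed.

Lemma lsum_bounds l L U :
  (forall z, In z l -> L <= z <= U) -> INR (length l) * L <= lsum l <= INR (length l) * U.
Proof.
  induction l as [|a l IH]; intros Hl; simpl length; simpl lsum; [simpl; lra|].
  rewrite S_INR. pose proof (Hl a (or_introl eq_refl)).
  pose proof (IH (fun z Hz => Hl z (or_intror Hz))). nra.
Qed.

Lemma fsum_nth_map g l : fsum (length l) (fun j => g (nth j l 0)) = lsum (map g l).
Proof.
  induction l as [|z l IH]; simpl length; [reflexivity|].
  rewrite fsum_shift; simpl. rewrite IH; reflexivity.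
Qed.

Lemma fsum_seq n g : fsum n g = lsum (map g (seq 0 n)).
Proof.
  induction n as [|n IH]; [reflexivity|].
  rewrite seq_S, map_app, lsum_app, <- IH. simpl; ring.
Qed.

Lemma exp_le_compat x y : x <= y -> exp x <= exp y.
Proof. intros [Hxy|Hxy]; [left; now apply exp_increasing|rewrite Hxy; lra]. Qed.

Lemma le_at_0_of_derive_nonpos (f df : R -> R) y : 0 <= y ->
  (forall x, is_derive f x (df x)) -> (forall x, 0 <= x -> df x <= 0) -> f y <= f 0.
Proof.
  intros Hy Hd Hdf.
  destruct (Req_dec y 0) as [->|Hy0]; [lra|].
  destruct (MVT_gen f 0 y df) as [c [Hc Heq]].
  - intros x _; apply Hd.
  - intros x _. apply derivable_continuous_pt; exists (df x); apply is_derive_Reals, Hd.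
  - rewrite Rmin_left, Rmax_right in Hc by lra.
    assert (df c <= 0) by (apply Hdf; lra). nra.
Qed.

Lemma sinh_le_mul_cosh y : 0 <= y -> (exp y - exp (-y)) / 2 <= y * ((exp y + exp (-y)) / 2).
Proof.
  intros Hy.
  pose (f x := (exp x - exp (-x)) / 2 - x * ((exp x + exp (-x)) / 2)).
  assert (Hf : f y <= f 0).
  { apply (le_at_0_of_derive_nonpos f (fun x => - (x * ((exp x - exp (-x)) / 2)))); auto.
    - intros x. unfold f. auto_derive; auto. field.
    - intros x Hx. assert (exp (-x) <= exp x) by (apply exp_le_compat; lra). nra. }
  unfold f in Hf. rewrite Ropp_0, exp_0 in Hf. lra.
Qed.

Lemma cosh_le_exp_sqr_nonneg y : 0 <= y -> (exp y + exp (-y)) / 2 <= exp (y ^ 2 / 2).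
Proof.
  intros Hy.
  pose (f x := (exp x + exp (-x)) / 2 * exp (- (x ^ 2 / 2))).
  assert (Hf : f y <= f 0).
  { apply (le_at_0_of_derive_nonpos f
      (fun x => ((exp x - exp (-x)) / 2 - x * ((exp x + exp (-x)) / 2)) * exp (- (x ^ 2 / 2)))); auto.
    - intros x. unfold f. auto_derive; auto.
      replace (x * (x * 1) * / 2) with (x ^ 2 / 2) by (unfold Rdiv; ring). field.
    - intros x Hx. pose proof (sinh_le_mul_cosh x Hx). pose proof (exp_pos (- (x ^ 2 / 2))). nra. }
  unfold f in Hf. replace (0 ^ 2 / 2) with 0 in Hf by field.
  rewrite !Ropp_0, !exp_0 in Hf.
  assert (exp (y ^ 2 / 2) * exp (- (y ^ 2 / 2)) = 1)
    by (rewrite <- exp_plus, Rplus_opp_r; apply exp_0).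
  pose proof (exp_pos (y ^ 2 / 2)). pose proof (exp_pos (- (y ^ 2 / 2))). nra.
Qed.

Lemma cosh_le_exp_sqr y : (exp y + exp (-y)) / 2 <= exp (y ^ 2 / 2).
Proof.
  destruct (Rle_dec 0 y) as [Hy|Hy]; [now apply cosh_le_exp_sqr_nonneg|].
  replace (y ^ 2) with ((- y) ^ 2) by ring.
  pose proof (cosh_le_exp_sqr_nonneg (- y) ltac:(lra)) as H. rewrite Ropp_involutive in H. lra.
Qed.

(* The right-hand side is the chord of [fun x => exp (th * x)] over [-M, M]. *)
Lemma exp_le_chord M th x : 0 < M -> -M <= x <= M ->
  exp (th * x) <= (exp (th * M) + exp (- (th * M))) / 2
                  + (exp (th * M) - exp (- (th * M))) / (2 * M) * x.
Proof.
  intros HM Hx.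
  pose proof (exp_ineq1_le (- (th * M) - th * x)). pose proof (exp_ineq1_le (th * M - th * x)).
  assert (E1 : exp (- (th * M)) = exp (th * x) * exp (- (th * M) - th * x))
    by (rewrite <- exp_plus; f_equal; ring).
  assert (E2 : exp (th * M) = exp (th * x) * exp (th * M - th * x))
    by (rewrite <- exp_plus; f_equal; ring).
  pose proof (exp_pos (th * x)).
  apply Rmult_le_reg_r with (2 * M); [lra|].
  replace (((exp (th * M) + exp (- (th * M))) / 2
            + (exp (th * M) - exp (- (th * M))) / (2 * M) * x) * (2 * M))
    with ((M - x) * exp (- (th * M)) + (M + x) * exp (th * M)) by (field; lra).
  rewrite E1, E2.
  assert (0 <= (M - x) * exp (th * x) * (exp (- (th * M) - th * x) - (1 + (- (th * M) - th * x))))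
    by (apply Rmult_le_pos; [apply Rmult_le_pos|]; lra).
  assert (0 <= (M + x) * exp (th * x) * (exp (th * M - th * x) - (1 + (th * M - th * x))))
    by (apply Rmult_le_pos; [apply Rmult_le_pos|]; lra).
  nra.
Qed.

(* Hoeffding's lemma for the uniform distribution on [l], with the crude constant [M^2/2]. *)
Lemma lsum_exp_le_mean (l : list R) L M th : 0 < M ->
  (forall z, In z l -> L <= z <= L + M) ->
  lsum (map (fun z => exp (th * z)) l)
    <= INR (length l) * exp (th * (lsum l / INR (length l)) + (th * M) ^ 2 / 2).
Proof.
  intros HM Hl.
  destruct l as [|z0 l0] eqn:El; [simpl; lra|]. rewrite <- El in *.
  set (n := INR (length l)). set (mu := lsum l / n).
  assert (Hn : 0 < n) by (unfold n; subst l; apply lt_0_INR; simpl; lia).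
  assert (Hmu : L <= mu <= L + M).
  { pose proof (lsum_bounds l L (L + M) Hl). fold n in H. unfold mu.
    split; apply Rmult_le_reg_r with n; auto; unfold Rdiv; rewrite Rmult_assoc, Rinv_l; lra. }
  set (C := (exp (th * M) + exp (- (th * M))) / 2).
  set (D := (exp (th * M) - exp (- (th * M))) / (2 * M)).
  eapply Rle_trans.
  { apply lsum_map_le with (g := fun z => exp (th * mu) * (C + D * (z - mu))).
    intros z Hz. pose proof (Hl z Hz).
    replace (th * z) with (th * mu + th * (z - mu)) by ring. rewrite exp_plus.
    apply Rmult_le_compat_l; [left; apply exp_pos|]. apply exp_le_chord; lra. }
  rewrite lsum_map_scal, lsum_map_plus, lsum_map_const, lsum_map_scal.
  replace (lsum (map (fun z => z - mu) l)) with 0.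
  2:{ rewrite (lsum_map_ext _ _ (fun z => z + (- mu))) by (intros; ring).
      rewrite lsum_map_plus, lsum_map_id, lsum_map_const. fold n. unfold mu. field. lra. }
  rewrite exp_plus, Rmult_0_r, Rplus_0_r. fold n.
  pose proof (cosh_le_exp_sqr (th * M)). fold C in H. pose proof (exp_pos (th * mu)).
  assert (0 <= n * exp (th * mu) * (exp ((th * M) ^ 2 / 2) - C))
    by (apply Rmult_le_pos; [apply Rmult_le_pos|]; lra).
  nra.
Qed.

Fixpoint esym (k : nat) (l : list R) : R :=
  match l with
  | nil => match k with O => 1 | S _ => 0 end
  | z :: l' => match k with O => 1 | S k' => z * esym k' l' + esym k l' end
  end.

Fixpoint remove_at (j : nat) (l : list R) : list R :=
  match l, j with
  | nil, _ => nil
  | _ :: l', O => l'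
  | z :: l', S j' => z :: remove_at j' l'
  end.

Lemma esym_0 l : esym 0 l = 1.
Proof. destruct l; reflexivity. Qed.

Lemma esym_1 l : esym 1 l = lsum l.
Proof. induction l as [|z l IH]; simpl; [reflexivity|]. rewrite esym_0, IH; ring. Qed.

Lemma esym_nonneg l k : (forall z, In z l -> 0 <= z) -> 0 <= esym k l.
Proof.
  revert k; induction l as [|z l IH]; intros [|k] Hl; simpl; try lra.
  assert (0 <= z) by (apply Hl; now left).
  pose proof (IH k (fun x Hx => Hl x (or_intror Hx))).
  pose proof (IH (S k) (fun x Hx => Hl x (or_intror Hx))). nra.
Qed.

Lemma esym_overflow l k : (length l < k)%nat -> esym k l = 0.
Proof.
  revert k; induction l as [|z l IH]; intros [|k] Hk; simpl in *; try lia; [reflexivity|].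
  rewrite !IH by lia; ring.
Qed.

Lemma esym_repeat_1_pos n k : (k <= n)%nat -> 0 < esym k (repeat 1 n).
Proof.
  revert k; induction n as [|n IH]; intros [|k] Hk; simpl; try lra; try lia.
  pose proof (IH k ltac:(lia)).
  assert (0 <= esym (S k) (repeat 1 n))
    by (apply esym_nonneg; intros z Hz; apply repeat_spec in Hz; lra).
  lra.
Qed.

(* Double counting of (k+1)-subsets with a distinguished element. *)
Lemma esym_S_sum_remove_at l k :
  INR (S k) * esym (S k) l = fsum (length l) (fun j => nth j l 0 * esym k (remove_at j l)).
Proof.
  revert k; induction l as [|z l IH]; intros k; [simpl; ring|].
  simpl length. rewrite fsum_shift. simpl nth. simpl remove_at.
  destruct k as [|k].
  - rewrite (fsum_ext _ _ (fun j => nth j l 0)) by (intros; rewrite esym_0; ring).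
    rewrite (fsum_nth_map (fun z => z)), lsum_map_id.
    simpl esym at 1. rewrite esym_0, esym_1. simpl; ring.
  - rewrite (fsum_ext _ _ (fun j => z * (nth j l 0 * esym k (remove_at j l))
                                 + nth j l 0 * esym (S k) (remove_at j l)))
      by (intros; simpl; ring).
    rewrite fsum_plus, fsum_scal, <- !IH.
    simpl esym. rewrite !S_INR; ring.
Qed.

Lemma remove_at_length j l : (j < length l)%nat -> length (remove_at j l) = pred (length l).
Proof.
  revert j; induction l as [|z l IH]; intros [|j] Hj; simpl in *; try lia.
  rewrite IH by lia. destruct l; simpl in *; lia.
Qed.

Lemma in_remove_at j l z : In z (remove_at j l) -> In z l.
Proof.
  revert j; induction l as [|a l IH]; intros [|j] Hz; simpl in *; auto.
  destruct Hz; [now left|right; eapply IH; eauto].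
Qed.

Lemma lsum_remove_at j l : (j < length l)%nat -> lsum (remove_at j l) = lsum l - nth j l 0.
Proof.
  revert j; induction l as [|z l IH]; intros [|j] Hj; simpl in *; try lia; try ring.
  rewrite IH by lia; ring.
Qed.

Lemma remove_at_map f j l : remove_at j (map f l) = map f (remove_at j l).
Proof. revert j; induction l as [|z l IH]; intros [|j]; simpl; auto. now rewrite IH. Qed.

Lemma remove_at_repeat (a : R) j n : (j < n)%nat -> remove_at j (repeat a n) = repeat a (pred n).
Proof.
  revert j; induction n as [|n IH]; intros [|j] Hj; simpl; try lia; auto.
  rewrite IH by lia. destruct n; simpl; auto; lia.
Qed.

Lemma esym_repeat_1_S n k :
  INR (S k) * esym (S k) (repeat 1 (S n)) = INR (S n) * esym k (repeat 1 n).
Proof.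
  rewrite esym_S_sum_remove_at, repeat_length.
  rewrite (fsum_ext _ _ (fun j => 1 * esym k (repeat 1 n))).
  - rewrite <- (repeat_length (esym k (repeat 1 n)) (S n)) at 1.
    rewrite (fsum_nth_map (fun _ => 1 * esym k (repeat 1 n))), lsum_map_const, repeat_length. ring.
  - intros j Hj. rewrite remove_at_repeat by lia.
    rewrite nth_indep with (d' := 1) by (rewrite repeat_length; lia).
    now rewrite nth_repeat.
Qed.

Lemma one_sub_ratio_bounds n k : (k <= n)%nat -> 0 <= 1 - INR k / INR n <= 1.
Proof.
  intros Hk. destruct n as [|n].
  - replace k with 0%nat by lia. simpl. unfold Rdiv. rewrite Rmult_0_l. lra.
  - assert (0 < INR (S n)) by (apply lt_0_INR; lia).
    assert (INR k <= INR (S n)) by (apply le_INR; lia). pose proof (pos_INR k).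
    assert (0 <= INR k / INR (S n) <= 1).
    { split; [apply Rdiv_le_0_compat; lra|].
      apply Rmult_le_reg_r with (INR (S n)); auto. field_simplify; lra. }
    lra.
Qed.

(* For [n = 0], hence [k = 0], this relies on [0 / 0 = 0]. *)
Lemma mean_step n k s : (k <= n)%nat ->
  INR k * (s / INR n) + (1 - INR k / INR n) * (s / INR (S n)) = INR (S k) * (s / INR (S n)).
Proof.
  intros Hk. destruct n as [|n].
  - replace k with 0%nat by lia. simpl. unfold Rdiv. rewrite Rinv_1. ring.
  - pose proof (pos_INR n). rewrite !S_INR. field. lra.
Qed.

(* The inductive step of [esym_exp_le]: after the induction hypothesis what remains is
   Hoeffding's lemma with [lam] damped by [1 - k / n]. *)
Lemma fsum_exp_remove_le l n k lam L M : length l = S n -> (k <= n)%nat -> 0 < M ->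
  (forall z, In z l -> L <= z <= L + M) ->
  fsum (S n) (fun j => exp (lam * nth j l 0)
                       * exp (lam * (INR k * ((lsum l - nth j l 0) / INR n))
                              + INR k * (lam ^ 2 * M ^ 2 / 2)))
    <= INR (S n)
       * exp (lam * (INR (S k) * (lsum l / INR (S n))) + INR (S k) * (lam ^ 2 * M ^ 2 / 2)).
Proof.
  intros Hl Hkn HM Hrange.
  set (q := lam ^ 2 * M ^ 2 / 2). set (s := lsum l). set (c := 1 - INR k / INR n).
  set (A := INR k * q + lam * (INR k * (s / INR n))).
  rewrite (fsum_ext _ _ (fun j => exp A * exp (lam * c * nth j l 0))).
  2:{ intros j _. rewrite <- !exp_plus. f_equal. unfold A, c, Rdiv; ring. }
  rewrite fsum_scal, <- Hl, (fsum_nth_map (fun z => exp (lam * c * z))).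
  eapply Rle_trans.
  { apply Rmult_le_compat_l; [left; apply exp_pos|]. apply (lsum_exp_le_mean l L M); auto. }
  rewrite Hl. fold s.
  assert (Hq : (lam * c * M) ^ 2 / 2 <= q).
  { pose proof (one_sub_ratio_bounds n k Hkn). fold c in H.
    unfold q. replace ((lam * c * M) ^ 2 / 2) with (c ^ 2 * (lam ^ 2 * M ^ 2 / 2)) by field.
    assert (0 <= lam ^ 2 * M ^ 2 / 2)
      by (apply Rmult_le_pos; [apply Rmult_le_pos; apply pow2_ge_0|lra]).
    assert (c ^ 2 <= 1) by nra. nra. }
  replace (lam * (INR (S k) * (s / INR (S n))) + INR (S k) * q)
    with (A + (lam * c * (s / INR (S n)) + q))
    by (rewrite <- (mean_step n k s Hkn), (S_INR k); unfold A, c; ring).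
  rewrite !exp_plus.
  pose proof (exp_le_compat _ _ Hq). pose proof (pos_INR (S n)).
  assert (0 <= INR (S n) * exp A * exp (lam * c * (s / INR (S n)))).
  { pose proof (exp_pos A). pose proof (exp_pos (lam * c * (s / INR (S n)))).
    apply Rmult_le_pos; [apply Rmult_le_pos|]; lra. }
  nra.
Qed.

(* Hoeffding's bound for sampling without replacement, in generating-function form:
   [esym k (exp (lam * l)) / esym k 1] is the moment generating function of the sum
   of a uniformly random k-subset of [l]. *)
Lemma esym_exp_le n : forall l k lam L M, length l = n -> 0 < M ->
  (forall z, In z l -> L <= z <= L + M) ->
  esym k (map (fun z => exp (lam * z)) l)
    <= esym k (repeat 1 n)
       * exp (lam * (INR k * (lsum l / INR n)) + INR k * (lam ^ 2 * M ^ 2 / 2)).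
Proof.
  induction n as [|n IH]; intros l k lam L M Hl HM Hrange;
    (destruct k as [|k];
     [rewrite !esym_0; simpl INR; rewrite !Rmult_0_l, Rmult_0_r, Rplus_0_r, exp_0; lra|]).
  { destruct l; [simpl; lra|discriminate]. }
  destruct (le_lt_dec k n) as [Hkn|Hkn].
  2:{ rewrite esym_overflow by (rewrite length_map; lia).
      rewrite (esym_overflow (repeat 1 (S n))) by (rewrite repeat_length; lia). lra. }
  set (E' := esym k (repeat 1 n)).
  assert (HE' : 0 <= E') by (apply esym_nonneg; intros z Hz; apply repeat_spec in Hz; lra).
  apply Rmult_le_reg_l with (INR (S k)); [apply lt_0_INR; lia|].
  rewrite esym_S_sum_remove_at, length_map, Hl, <- Rmult_assoc, esym_repeat_1_S. fold E'.
  eapply Rle_trans.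
  { apply fsum_le; intros j Hj.
    rewrite nth_indep with (d' := exp (lam * 0)) by (rewrite length_map; lia).
    rewrite (map_nth (fun z => exp (lam * z)) l 0 j), remove_at_map.
    apply Rmult_le_compat_l; [left; apply exp_pos|].
    apply (IH (remove_at j l) k lam L M); auto.
    - rewrite remove_at_length; lia.
    - intros z Hz; apply Hrange; eapply in_remove_at; eauto. }
  rewrite (fsum_ext _ _ (fun j => E' * (exp (lam * nth j l 0)
             * exp (lam * (INR k * ((lsum l - nth j l 0) / INR n)) + INR k * (lam ^ 2 * M ^ 2 / 2)))))
    by (intros j Hj; rewrite lsum_remove_at by lia; fold E'; ring).
  rewrite fsum_scal, (Rmult_comm (INR (S n))), Rmult_assoc.
  apply Rmult_le_compat_l; [assumption|]. now apply fsum_exp_remove_le with L.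
Qed.

Fixpoint selprod (h : list bool) (l : list R) : R :=
  match h, l with
  | b :: h', z :: l' => (if b then z else 1) * selprod h' l'
  | _, _ => 1
  end.

Fixpoint selsum (h : list bool) (l : list R) : R :=
  match h, l with
  | b :: h', z :: l' => (if b then z else 0) + selsum h' l'
  | _, _ => 0
  end.

Definition ksubsets (n k : nat) : list (list bool) :=
  filter (fun h => Nat.eqb (card h) k) (bvecs n).

Lemma card_cons_true h : card (true :: h) = S (card h).
Proof. unfold card; simpl. destruct (Bool.bool_dec true true); congruence. Qed.

Lemma card_cons_false h : card (false :: h) = card h.
Proof. unfold card; simpl. destruct (Bool.bool_dec false true); congruence. Qed.

Lemma in_bvecs_length n h : In h (bvecs n) -> length h = n.
Proof.
  revert h; induction n as [|n IH]; simpl; intros h Hh.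
  - destruct Hh as [<-|[]]; reflexivity.
  - apply in_app_or in Hh.
    destruct Hh as [Hh|Hh]; apply in_map_iff in Hh; destruct Hh as [x [<- Hx]]; simpl; auto.
Qed.

Lemma lsum_filter {T} (L : list T) (P : T -> bool) f :
  lsum (map f (filter P L)) = lsum (map (fun h => if P h then f h else 0) L).
Proof.
  induction L as [|a L IH]; simpl; [reflexivity|].
  destruct (P a); simpl; rewrite IH; ring.
Qed.

Lemma lsum_ksubsets_selprod l k :
  lsum (map (fun h => selprod h l) (ksubsets (length l) k)) = esym k l.
Proof.
  unfold ksubsets. rewrite lsum_filter. revert k.
  induction l as [|z l IH]; intros k.
  - destruct k; simpl; unfold card; simpl; ring.
  - simpl length. simpl bvecs. rewrite map_app, lsum_app, !map_map.
    assert (Hfalse : forall k', map (fun h => if card (false :: h) =? k'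
                                      then selprod (false :: h) (z :: l) else 0) (bvecs (length l))
                            = map (fun h => if card h =? k' then selprod h l else 0) (bvecs (length l))).
    { intros k'; apply map_ext; intros h. rewrite card_cons_false. simpl. now rewrite Rmult_1_l. }
    rewrite Hfalse, IH. destruct k as [|k].
    + rewrite (lsum_map_ext _ _ (fun _ => 0)) by (intros; rewrite card_cons_true; reflexivity).
      rewrite lsum_map_const, !esym_0; ring.
    + rewrite (lsum_map_ext _ _ (fun h => z * (if card h =? k then selprod h l else 0)))
        by (intros; rewrite card_cons_true; simpl; destruct (card x =? k); ring).
      rewrite lsum_map_scal, IH. reflexivity.
Qed.

Lemma selprod_repeat_1 h n : selprod h (repeat 1 n) = 1.
Proof.
  revert n; induction h as [|b h IH]; intros [|n]; simpl; auto.
  rewrite IH; destruct b; ring.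
Qed.

Lemma length_ksubsets n k : INR (length (ksubsets n k)) = esym k (repeat 1 n).
Proof.
  rewrite <- (lsum_ksubsets_selprod (repeat 1 n)), repeat_length.
  rewrite (lsum_map_ext _ _ (fun _ => 1)) by (intros; apply selprod_repeat_1).
  rewrite lsum_map_const; ring.
Qed.

Lemma exp_selsum lam h l : exp (lam * selsum h l) = selprod h (map (fun z => exp (lam * z)) l).
Proof.
  revert l; induction h as [|b h IH]; intros [|z l]; simpl;
    try (rewrite Rmult_0_r, exp_0; reflexivity).
  rewrite Rmult_plus_distr_l, exp_plus, IH.
  destruct b; [reflexivity|]. rewrite Rmult_0_r, exp_0; reflexivity.
Qed.

Lemma ksubsets_mgf_le l k lam L M : 0 < M -> (forall z, In z l -> L <= z <= L + M) ->
  lsum (map (fun h => exp (lam * selsum h l)) (ksubsets (length l) k))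
    <= INR (length (ksubsets (length l) k))
       * exp (lam * (INR k * (lsum l / INR (length l))) + lam ^ 2 * (INR k * M ^ 2) / 2).
Proof.
  intros HM Hrange.
  rewrite (lsum_map_ext _ _ (fun h => selprod h (map (fun z => exp (lam * z)) l)))
    by (intros; apply exp_selsum).
  rewrite <- (length_map (fun z => exp (lam * z)) l) at 1.
  rewrite lsum_ksubsets_selprod, length_ksubsets.
  replace (lam ^ 2 * (INR k * M ^ 2) / 2) with (INR k * (lam ^ 2 * M ^ 2 / 2)) by field.
  now apply esym_exp_le with L.
Qed.

Lemma length_filter_le_lsum {T} (L : list T) (P : T -> bool) (g : T -> R) :
  (forall h, In h L -> 0 <= g h) -> (forall h, In h L -> P h = true -> 1 <= g h) ->
  INR (length (filter P L)) <= lsum (map g L).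
Proof.
  induction L as [|a L IH]; simpl; intros Hg HP; [lra|].
  pose proof (IH (fun h Hh => Hg h (or_intror Hh)) (fun h Hh => HP h (or_intror Hh))).
  destruct (P a) eqn:Ha; simpl length; try rewrite S_INR.
  - pose proof (HP a (or_introl eq_refl) Ha). lra.
  - pose proof (Hg a (or_introl eq_refl)). lra.
Qed.

(* Chernoff's bound, with the moment generating function bound of Hoeffding type
   optimised at [lam = u / s] on both tails. *)
Lemma length_filter_deviation_le {T} (L : list T) (P : T -> bool) (f : T -> R) (c s u N : R) :
  0 < s -> 0 <= u ->
  (forall lam, lsum (map (fun h => exp (lam * f h)) L) <= N * exp (lam * c + lam ^ 2 * s / 2)) ->
  (forall h, In h L -> P h = true -> u <= Rabs (f h - c)) ->
  INR (length (filter P L)) <= 2 * N * exp (- (u ^ 2 / (2 * s))).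
Proof.
  intros Hs Hu Hmgf HP.
  set (lam := u / s).
  assert (Hlam : 0 <= lam) by (apply Rdiv_le_0_compat; lra).
  eapply Rle_trans.
  { apply (length_filter_le_lsum L P
             (fun h => exp (lam * (f h - c - u)) + exp (- lam * (f h - c + u)))).
    - intros h _. pose proof (exp_pos (lam * (f h - c - u))).
      pose proof (exp_pos (- lam * (f h - c + u))). lra.
    - intros h Hh HPh. specialize (HP h Hh HPh).
      pose proof (exp_pos (lam * (f h - c - u))). pose proof (exp_pos (- lam * (f h - c + u))).
      pose proof (exp_ineq1_le (lam * (f h - c - u))).
      pose proof (exp_ineq1_le (- lam * (f h - c + u))).
      destruct (Rle_dec 0 (f h - c)).
      + rewrite Rabs_right in HP by lra. nra.
      + rewrite Rabs_left in HP by lra. nra. }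
  rewrite (lsum_map_ext _ _ (fun h => exp (- lam * (c + u)) * exp (lam * f h)
                                  + exp (lam * (c - u)) * exp (- lam * f h)))
    by (intros; rewrite <- !exp_plus; f_equal; f_equal; ring).
  rewrite lsum_map_plus, !lsum_map_scal.
  assert (Hopt : forall a b, a + (b + lam ^ 2 * s / 2) = - (u ^ 2 / (2 * s)) ->
                 exp a * (N * exp (b + lam ^ 2 * s / 2)) = N * exp (- (u ^ 2 / (2 * s)))).
  { intros a b Hab. rewrite <- Hab, (exp_plus a). ring. }
  pose proof (Hopt (- lam * (c + u)) (lam * c) ltac:(unfold lam; field; lra)) as Hup.
  pose proof (Hopt (lam * (c - u)) (- lam * c) ltac:(unfold lam; field; lra)) as Hdown.
  pose proof (Hmgf lam). pose proof (Hmgf (- lam)).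
  replace ((- lam) ^ 2) with (lam ^ 2) in * by ring.
  pose proof (exp_pos (- lam * (c + u))). pose proof (exp_pos (lam * (c - u))).
  assert (exp (- lam * (c + u)) * lsum (map (fun h => exp (lam * f h)) L)
          <= exp (- lam * (c + u)) * (N * exp (lam * c + lam ^ 2 * s / 2)))
    by (apply Rmult_le_compat_l; lra).
  assert (exp (lam * (c - u)) * lsum (map (fun h => exp (- lam * f h)) L)
          <= exp (lam * (c - u)) * (N * exp (- lam * c + lam ^ 2 * s / 2)))
    by (apply Rmult_le_compat_l; lra).
  lra.
Qed.

Lemma prob_in_singleton (p : nat -> nat -> R) x y : prob_in p x (fun z => Nat.eqb z y) (p x y).
Proof.
  assert (Hpartial : forall n, sum_f_R0 (fun z => if Nat.eqb z y then p x z else 0) n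
                               = if Nat.leb y n then p x y else 0).
  { induction n as [|n IH]; cbn [sum_f_R0].
    - destruct (Nat.eqb_spec 0 y), (Nat.leb_spec y 0); try subst y; try lia; reflexivity.
    - rewrite IH.
      destruct (Nat.leb_spec y n), (Nat.leb_spec y (S n)), (Nat.eqb_spec (S n) y);
        try subst y; try lia; ring. }
  intros e He. exists y. intros n Hn. rewrite Hpartial.
  destruct (Nat.leb_spec y n); [|lia]. unfold R_dist. rewrite Rminus_diag, Rabs_R0; assumption.
Qed.

Lemma private_pointwise eps d p x x' y : eps_private eps d p -> (x < d)%nat -> (x' < d)%nat ->
  p x y <= exp eps * p x' y.
Proof.
  intros Hpriv Hx Hx'.
  apply (Hpriv x x' (fun z => Nat.eqb z y)); auto; apply prob_in_singleton.
Qed.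

Lemma exists_argmin (a : nat -> R) n : (0 < n)%nat ->
  exists x0, (x0 < n)%nat /\ forall x, (x < n)%nat -> a x0 <= a x.
Proof.
  induction n as [|n IH]; intros Hn; [lia|]. destruct (Nat.eq_dec n 0) as [->|Hn0].
  - exists 0%nat. split; [lia|]. intros x Hx. replace x with 0%nat by lia. lra.
  - destruct (IH ltac:(lia)) as [x0 [Hx0 Hmin]].
    destruct (Rle_dec (a x0) (a n)).
    + exists x0. split; [lia|]. intros x Hx.
      destruct (Nat.eq_dec x n) as [->|]; [assumption|]. apply Hmin; lia.
    + exists n. split; [lia|]. intros x Hx.
      destruct (Nat.eq_dec x n) as [->|]; [lra|]. pose proof (Hmin x ltac:(lia)). lra.
Qed.

Lemma private_range eps d p y : eps_private eps d p -> (0 < d)%nat ->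
  exists L, forall x, (x < d)%nat -> L <= p x y <= exp eps * L.
Proof.
  intros Hpriv Hd. destruct (exists_argmin (fun x => p x y) d Hd) as [x0 [Hx0 Hmin]].
  exists (p x0 y). intros x Hx. split; [now apply Hmin|]. now apply (private_pointwise eps d).
Qed.

Lemma ln_le_sub_1 r : 0 < r -> ln r <= r - 1.
Proof.
  intros Hr. rewrite <- (ln_exp (r - 1)). apply ln_le; [assumption|].
  pose proof (exp_ineq1_le (r - 1)). lra.
Qed.

Lemma Rabs_ln_lt r t : Rabs (r - 1) < t -> t < 1 -> 0 < r /\ Rabs (ln r) < t / (1 - t).
Proof.
  intros Hr Ht. apply Rabs_def2 in Hr.
  assert (Hr0 : 0 < r) by lra. split; [assumption|].
  assert (Hdiv : t <= t / (1 - t)).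
  { apply Rmult_le_reg_r with (1 - t); [lra|]. field_simplify; nra. }
  destruct (Rle_dec 1 r) as [H1|H1].
  - assert (0 <= ln r) by (rewrite <- ln_1; apply ln_le; lra).
    pose proof (ln_le_sub_1 r Hr0). rewrite Rabs_right by lra. lra.
  - assert (ln r < 0) by (rewrite <- ln_1; apply ln_increasing; lra).
    assert (Hinv : - ln r <= / r - 1)
      by (rewrite <- ln_Rinv by assumption; apply ln_le_sub_1, Rinv_0_lt_compat, Hr0).
    assert (/ r - 1 < t / (1 - t)).
    { replace (/ r - 1) with ((1 - r) / r) by (field; lra).
      apply Rmult_lt_reg_r with (r * (1 - t)); [nra|]. field_simplify; nra. }
    rewrite Rabs_left by lra. lra.
Qed.

Lemma leakyb_deviation v t d p h y : (0 < card h)%nat -> 0 < prU d p y -> t < 1 ->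
  t / (1 - t) <= v -> leakyb v d p h y = true ->
  t * (INR (card h) * prU d p y)
    <= Rabs (fsum d (fun x => if mem h x then p x y else 0) - INR (card h) * prU d p y).
Proof.
  intros Hh Hmu Ht Hv Hleak.
  set (mu := prU d p y) in *. set (m := INR (card h)).
  set (s := fsum d (fun x => if mem h x then p x y else 0)).
  assert (Hm : 0 < m) by (apply lt_0_INR; assumption).
  destruct (Rle_dec (t * (m * mu)) (Rabs (s - m * mu))) as [|Hclose]; [assumption|exfalso].
  assert (Hr : Rabs (prUH d p h y / mu - 1) < t).
  { unfold prUH. fold s m.
    replace (s / m / mu - 1) with ((s - m * mu) * / (m * mu)) by (field; lra).
    rewrite Rabs_mult, Rabs_inv, (Rabs_right (m * mu)) by nra.
    apply Rmult_lt_reg_r with (m * mu); [nra|]. field_simplify; nra. }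
  destruct (Rabs_ln_lt _ _ Hr Ht) as [Hr0 Hln].
  revert Hleak. unfold leakyb, Rltb, Reqb. fold mu.
  destruct (Rlt_dec 0 mu); [|lra].
  destruct (Req_EM_T (prUH d p h y) 0) as [Hz|].
  - rewrite Hz in Hr0. unfold Rdiv in Hr0. lra.
  - destruct (Rlt_dec v (Rabs (ln (prUH d p h y / mu)))); [lra|discriminate].
Qed.

Lemma fsum_mem_selsum h g :
  fsum (length h) (fun x => if mem h x then g x else 0) = selsum h (map g (seq 0 (length h))).
Proof.
  revert g; induction h as [|b h IH]; intros g; [reflexivity|].
  simpl length. rewrite fsum_shift. unfold mem in *. simpl nth.
  rewrite (IH (fun j => g (S j))). cbn [seq map selsum].
  rewrite <- seq_shift, map_map. reflexivity.
Qed.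

Lemma half_subsets_double m : half_subsets (2 * m) = ksubsets (2 * m) m.
Proof. unfold half_subsets, ksubsets. now rewrite Nat.mul_comm, Nat.div_mul. Qed.

Lemma in_half_subsets m h : In h (half_subsets (2 * m)) -> card h = m /\ length h = (2 * m)%nat.
Proof.
  rewrite half_subsets_double. unfold ksubsets. intros Hh. apply filter_In in Hh.
  destruct Hh as [Hh Hc]. split; [now apply Nat.eqb_eq|]. now apply in_bvecs_length.
Qed.

Lemma private_values_range eps d p y : eps_private eps d p -> 0 < prU d p y ->
  exists L, 0 < L <= prU d p y /\
    forall z, In z (map (fun x => p x y) (seq 0 d)) -> L <= z <= L + (exp eps - 1) * L.
Proof.
  intros Hpriv Hmu.
  assert (Hd : (0 < d)%nat)
    by (destruct d; [unfold prU in Hmu; simpl in Hmu; unfold Rdiv in Hmu; lra|lia]).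
  destruct (private_range eps d p y Hpriv Hd) as [L HL].
  assert (Hrange : forall z, In z (map (fun x => p x y) (seq 0 d)) ->
                            L <= z <= L + (exp eps - 1) * L).
  { intros z Hz. apply in_map_iff in Hz. destruct Hz as [x [<- Hx]]. apply in_seq in Hx.
    specialize (HL x ltac:(lia)). lra. }
  exists L. split; [|assumption].
  pose proof (lsum_bounds _ _ _ Hrange) as Hsum. rewrite length_map, length_seq in Hsum.
  assert (Hdpos : 0 < INR d) by (apply lt_0_INR; assumption).
  unfold prU in *. rewrite fsum_seq in *.
  assert (L <= lsum (map (fun x => p x y) (seq 0 d)) / INR d <= exp eps * L).
  { split; apply Rmult_le_reg_r with (INR d); auto; field_simplify; lra. }
  pose proof (exp_pos eps). split; [nra|lra].
Qed.

Lemma div_one_sub_le t E : 0 <= t -> 1 <= E -> (E + 1) * t < 1 -> t / (1 - t) <= (E + 1) * t.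
Proof.
  intros Ht HE Hv. assert (t < 1) by nra.
  apply Rmult_le_reg_r with (1 - t); [lra|]. field_simplify; nra.
Qed.

Lemma leakyb_false_of_prU_nonpos v d p h y : ~ 0 < prU d p y -> leakyb v d p h y = false.
Proof. intros Hmu. unfold leakyb, Rltb. now destruct (Rlt_dec 0 (prU d p y)). Qed.

Lemma count_leakyb_le eps w m p y : 0 < eps -> 0 <= w -> (0 < m)%nat ->
  eps_private eps (2 * m) p -> (exp (2 * eps) - 1) * w < 1 ->
  INR (length (filter (fun h => leakyb ((exp (2 * eps) - 1) * w) (2 * m) p h y)
                      (half_subsets (2 * m))))
    <= 2 * INR (length (half_subsets (2 * m))) * exp (- (INR m * w ^ 2 / 2)).
Proof.
  intros Heps Hw Hm Hpriv. set (v := (exp (2 * eps) - 1) * w). intros Hv.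
  set (E := exp eps). set (t := (E - 1) * w).
  assert (HE : 1 < E) by (unfold E; rewrite <- exp_0; apply exp_increasing; lra).
  assert (Hvt : v = (E + 1) * t)
    by (unfold v, t, E; replace (2 * eps) with (eps + eps) by ring; rewrite exp_plus; ring).
  assert (Hmpos : 0 < INR m) by (apply lt_0_INR; assumption).
  destruct (Rlt_dec 0 (prU (2 * m) p y)) as [Hmu|Hmu].
  2:{ eapply Rle_trans.
      { apply (length_filter_le_lsum _ _ (fun _ => 0)); [intros; lra|].
        intros h _. now rewrite leakyb_false_of_prU_nonpos. }
      rewrite lsum_map_const. pose proof (pos_INR (length (half_subsets (2 * m)))).
      pose proof (exp_pos (- (INR m * w ^ 2 / 2))). nra. }
  destruct (private_values_range eps (2 * m) p y Hpriv Hmu) as [L [[HL0 HLmu] Hrange]].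
  fold E in Hrange. set (al := map (fun x => p x y) (seq 0 (2 * m))). set (M := (E - 1) * L).
  assert (HM : 0 < M) by (unfold M; nra).
  assert (Hmu_al : prU (2 * m) p y = lsum al / INR (length al))
    by (unfold prU, al; rewrite fsum_seq, length_map, length_seq; reflexivity).
  replace (- (INR m * w ^ 2 / 2)) with (- ((M * INR m * w) ^ 2 / (2 * (INR m * M ^ 2))))
    by (field; split; lra).
  apply (length_filter_deviation_le _ _ (fun h => selsum h al) (INR m * prU (2 * m) p y)).
  - apply Rmult_lt_0_compat; [lra|]. apply pow_lt; lra.
  - apply Rmult_le_pos; [apply Rmult_le_pos|]; lra.
  - intros lam. rewrite Hmu_al, half_subsets_double.
    replace (2 * m)%nat with (length al) by (unfold al; rewrite length_map, length_seq; reflexivity).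
    apply ksubsets_mgf_le with L; assumption.
  - intros h Hh Hleak. destruct (in_half_subsets m h Hh) as [Hcard Hlen].
    assert (Ht1 : t < 1) by nra.
    assert (Htv : t / (1 - t) <= v)
      by (rewrite Hvt; apply div_one_sub_le; [unfold t; nra|lra|lra]).
    assert (Hdev := leakyb_deviation v t (2 * m) p h y ltac:(lia) Hmu Ht1 Htv Hleak).
    rewrite Hcard, <- Hlen, fsum_mem_selsum, Hlen in Hdev. fold al in Hdev.
    assert (M * INR m * w <= t * (INR m * prU (2 * m) p y)).
    { unfold M, t.
      assert (0 <= (E - 1) * INR m * w) by (apply Rmult_le_pos; [apply Rmult_le_pos|]; lra).
      nra. }
    lra.
Qed.

Lemma mul_sqrt_lt_1 a K d : 0 < d -> 0 <= K -> d > 4 * a ^ 2 * K -> a * sqrt (4 / d * K) < 1.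
Proof.
  intros Hd HK Ha.
  assert (Hx : 0 <= 4 / d * K) by (apply Rmult_le_pos; [apply Rdiv_le_0_compat|]; lra).
  pose proof (sqrt_sqrt _ Hx). pose proof (sqrt_pos (4 / d * K)).
  assert (a ^ 2 * (4 / d * K) < 1).
  { apply Rmult_lt_reg_r with d; [assumption|]. field_simplify; lra. }
  nra.
Qed.

Lemma length_filter_negb {T} (L : list T) (P : T -> bool) :
  (length (filter (fun h => negb (P h)) L) + length (filter P L) = length L)%nat.
Proof. induction L as [|a L IH]; simpl; [reflexivity|]. destruct (P a); simpl; lia. Qed.

Lemma prob_not_leaky_ge v d p y beta : 0 < INR (length (half_subsets d)) ->
  INR (length (filter (fun h => leakyb v d p h y) (half_subsets d)))
    <= beta * INR (length (half_subsets d)) ->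
  prob_not_leaky v d p y >= 1 - beta.
Proof.
  intros HN Hleaky. unfold prob_not_leaky.
  pose proof (length_filter_negb (half_subsets d) (fun h => leakyb v d p h y)) as Hs.
  apply (f_equal INR) in Hs. rewrite plus_INR in Hs.
  apply Rle_ge. apply Rmult_le_reg_r with (INR (length (half_subsets d))); [assumption|].
  field_simplify; lra.
Qed.

Theorem mainTheorem4 (eps beta : R) (d : nat) (p : nat -> nat -> R) :
  0 < eps -> 0 < beta < 1 ->
  Nat.Even d ->
  INR d > 4 * (exp (2 * eps) - 1) ^ 2 * ln (2 / beta) ->
  is_randomizer d p -> eps_private eps d p ->
  forall y : nat,
    prob_not_leaky ((exp (2 * eps) - 1) * sqrt (4 / INR d * ln (2 / beta))) d p y
      >= 1 - beta.
Proof.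
  intros Heps Hbeta [m ->] Hd _ Hpriv y.
  set (K := ln (2 / beta)) in *. set (w := sqrt (4 / INR (2 * m) * K)).
  assert (HK : 0 < K).
  { unfold K. rewrite <- ln_1. apply ln_increasing; [lra|].
    apply Rmult_lt_reg_r with beta; [lra|]. field_simplify; lra. }
  assert (Hdpos : 0 < INR (2 * m)) by (pose proof (pow2_ge_0 (exp (2 * eps) - 1)); nra).
  assert (Hm : (0 < m)%nat) by (destruct m; [simpl in Hdpos; lra|lia]).
  assert (HmK : INR m * w ^ 2 / 2 = K).
  { unfold w. rewrite <- Rsqr_pow2, Rsqr_sqrt.
    - rewrite mult_INR. simpl INR. field. apply not_0_INR. lia.
    - apply Rmult_le_pos; [apply Rdiv_le_0_compat|]; lra. }
  apply prob_not_leaky_ge.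
  - rewrite half_subsets_double, length_ksubsets. apply esym_repeat_1_pos. lia.
  - eapply Rle_trans; [apply count_leakyb_le; auto; [apply sqrt_pos|]|].
    + apply mul_sqrt_lt_1; lra.
    + rewrite HmK. unfold K. rewrite exp_Ropp, exp_ln by (apply Rdiv_lt_0_compat; lra).
      right. field. lra.
Qed.
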